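(* Let $\Sigma\subseteq\mathbb{Z}^{n+2}$ be as defined in the context, and let $e_0,\dots,e_t\in\Sigma$ with positive integer first coordinates $\delta_0,\dots,\delta_t$ be such that $\Sigma$ is contained in the $\mathbb{Q}_{\ge0}$-span of $e_0,\dots,e_t$. Let $S=\sum_{j=0}^t\delta_j$, let $w_1,\dots,w_r$ be in bijection with the nonzero elements $\sigma_1,\dots,\sigma_r$ of $\Sigma$ whose first coordinate is at most $S$, and let $\chi:k[w_1,\dots,w_r]\to k[\Sigma]$ be the homomorphism of graded $k$-algebras sending $w_i$ to the monomial of $k[\Sigma]$ corresponding to $\sigma_i$ (with $\deg w_i$ = first coordinate of $\sigma_i$). Then $\chi$ is surjective and $\ker\chi$ is generated by homogeneous elements of degree at most $2(S-1)$.
   Context: Fix $\alpha_0,\dots,\alpha_n\in\mathbb{Q}$ and $a_i,b_i\in\mathbb{Z}$; $\Sigma=\{(d,c_0,\dots,c_n)\in\mathbb{Z}^{n+2}:d\ge0,\ c_i\ge-d\alpha_i\ \forall i,\ \sum a_ic_i=\sum b_ic_i=0\}$, a semigroup under addition. $k[\Sigma]$ is the semigroup ring, with $k$-basis the monomials $u^dz_0^{c_0}\cdots z_n^{c_n}$ for $(d,c_0,\dots,c_n)\in\Sigma$, graded by $d$. *)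

From HB Require Import structures.
From mathcomp Require Import all_boot all_order all_algebra.
Set Implicit Arguments. Unset Strict Implicit. Unset Printing Implicit Defensive.
Import Order.TTheory GRing.Theory Num.Theory.
Local Open Scope ring_scope.

(* A point (d, c_0, ..., c_n) of Z^{n+2}: first coordinate d, rest c. *)
Definition point (n : nat) : Type := (int * {ffun 'I_n.+1 -> int})%type.

Definition pt_add n (x y : point n) : point n :=
  (x.1 + y.1, [ffun i => x.2 i + y.2 i]).
Definition pt_zero n : point n := (0, [ffun _ => 0]).
Definition pt_scale n (m : nat) (x : point n) : point n :=
  (x.1 *+ m, [ffun i => x.2 i *+ m]).

Definition inSigma n (alpha : 'I_n.+1 -> rat) (a b : 'I_n.+1 -> int)
    (x : point n) : Prop :=
  0 <= x.1 /\
  (forall i, - (x.1%:~R * alpha i) <= (x.2 i)%:~R :> rat) /\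
  \sum_i a i * x.2 i = 0 /\ \sum_i b i * x.2 i = 0.

Definition inQnnSpan n t (e : 'I_t.+1 -> point n) (x : point n) : Prop :=
  exists lam : 'I_t.+1 -> rat, (forall j, 0 <= lam j) /\
    (x.1)%:~R = \sum_j lam j * ((e j).1)%:~R /\
    (forall i, (x.2 i)%:~R = \sum_j lam j * ((e j).2 i)%:~R).

(* Polynomials in k[w_1..w_r], given as finite formal sums of terms
   c * w^m (coefficient, exponent vector); two term lists denote the same
   polynomial iff their coefficient functions agree. *)
Definition mono (r : nat) := {ffun 'I_r -> nat}.
Definition mpoly (k : fieldType) (r : nat) := seq (k * mono r)%type.

Definition pcoef (k : fieldType) r (p : mpoly k r) (m : mono r) : k :=
  \sum_(u <- p | u.2 == m) u.1.

Definition pmul (k : fieldType) r (p q : mpoly k r) : mpoly k r :=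
  [seq (u.1 * v.1, [ffun i => u.2 i + v.2 i] : mono r) | u : (k * mono r)%type <- p, v : (k * mono r)%type <- q].

(* Elements of k[Sigma]: finite formal sums of c * u^s, s a point. *)
Definition scoef (k : fieldType) n (f : seq (k * point n)%type) (x : point n) : k :=
  \sum_(u <- f | u.2 == x) u.1.

(* chi : w_i |-> monomial of sigma_i; the image of w^m is the monomial of
   sum_i m_i sigma_i. chi p is given by its coefficient function on Z^{n+2}. *)
Definition mexp n r (sigma : 'I_r -> point n) (m : mono r) : point n :=
  \big[@pt_add n / pt_zero n]_i pt_scale (m i) (sigma i).

Definition chi (k : fieldType) n r (sigma : 'I_r -> point n) (p : mpoly k r)
    (x : point n) : k :=
  \sum_(u <- p | mexp sigma u.2 == x) u.1.

Definition mdeg n r (sigma : 'I_r -> point n) (m : mono r) : int :=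
  \sum_i (sigma i).1 *+ m i.

Definition homogeneous (k : fieldType) n r (sigma : 'I_r -> point n)
    (D : int) (p : mpoly k r) : Prop :=
  forall m, pcoef p m != 0 -> mdeg sigma m = D.

(* Surjectivity: a point of Sigma of degree > S has a nonnegative rational
   representation with some coefficient >= 1, say at e_j, and subtracting e_j
   stays in Sigma; induct on the degree.
   Kernel: it is spanned by the binomials m - m' with equal images, and we show
   by induction on the degree of the common image x that each of them lies in
   the ideal generated by the kernel binomials of degree <= 2(S-1).  Above that
   degree every monomial of the fiber has a factor of degree >= S, which can be
   traded, in lower degree, for one divisible by w_j, the variable of some e_j.
   Monomials divisible by w_j and w_j' are connected through the fiber over
   x - e_j - e_j' whenever some representation of x has coefficients >= 1 at j
   and j'; since every representation of x has a coefficient >= 1 + 1/S, moving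
   linearly from one representation to another connects any two such j. *)

From HB Require Import structures.
From mathcomp Require Import all_boot all_order all_algebra.
From mathcomp Require Import zify ring lra.
Import Order.TTheory GRing.Theory Num.Theory.
Local Open Scope ring_scope.
Set Implicit Arguments. Unset Strict Implicit. Unset Printing Implicit Defensive.

Lemma pt_scaleE n m (x : point n) : pt_scale m x = x *+ m.
Proof.
rewrite /pt_scale [RHS]surjective_pairing; congr pair; first by rewrite raddfMn.
by apply/ffunP => i; rewrite ffunE raddfMn ffunMnE.
Qed.

Definition mvar r (i : 'I_r) : mono r := [ffun j => nat_of_bool (i == j)].

Section MonomialImage.
Variables (n r : nat) (sigma : 'I_r -> point n).

Lemma mexpE m : mexp sigma m = \sum_i sigma i *+ m i.
Proof. by apply: eq_bigr => i _; rewrite pt_scaleE. Qed.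

Lemma mexpD : {morph mexp sigma : m1 m2 / m1 + m2}.
Proof.
by move=> m1 m2; rewrite !mexpE -big_split; apply: eq_bigr => i _; rewrite ffunE mulrnDr.
Qed.

Lemma mexp0 : mexp sigma 0 = 0.
Proof. by rewrite mexpE big1 // => i _; rewrite ffunE mulr0n. Qed.

Lemma mexp_var i : mexp sigma (mvar i) = sigma i.
Proof.
rewrite mexpE (bigD1 i) //= ffunE eqxx big1 ?addr0 // => j.
by rewrite ffunE eq_sym => /negbTE ->.
Qed.

Lemma mdegE m : mdeg sigma m = (mexp sigma m).1.
Proof. by rewrite mexpE raddf_sum; apply: eq_bigr => i _; rewrite raddfMn. Qed.

End MonomialImage.

Lemma mono_split r (m : mono r) : m != 0 -> exists i m1, m = mvar i + m1.
Proof.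
move=> m_neq0; have [i m_i_gt0] : exists i, (0 < m i)%N.
  apply/existsP; apply: contraR m_neq0 => /existsPn m_le0.
  by apply/eqP/ffunP => i; move: (m_le0 i); rewrite ffunE lt0n negbK => /eqP.
exists i, [ffun l => m l - nat_of_bool (i == l)]%N.
apply/ffunP => l; rewrite !ffunE.
by case: (eqVneq i l) => [<-|_] /=; [exact/esym/subnKC | exact/esym/subn0].
Qed.

Definition mle r (a x : mono r) := [forall i, (a i <= x i)%N].
Definition msub r (x a : mono r) : mono r := [ffun i => (x i - a i)%N].

Lemma maddE r (a v x : mono r) : (a + v == x) = mle a x && (v == msub x a).
Proof.
apply/eqP/andP => [<-|[/forallP a_le /eqP ->]].
  split; first by apply/forallP=> i; rewrite ffunE leq_addr.
  by apply/eqP/ffunP=> i; rewrite !ffunE addKn.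
by apply/ffunP=> i; rewrite !ffunE; exact: subnKC.
Qed.

Lemma mleD r (a u x : mono r) : mle (a + u) x = mle a x && mle u (msub x a).
Proof.
apply/forallP/andP => [au_le|[/forallP a_le /forallP u_le] i].
  have a_le i : (a i <= x i)%N.
    by apply: leq_trans (au_le i); rewrite ffunE leq_addr.
  split; apply/forallP => i //.
  by rewrite ffunE leq_subRL //; have := au_le i; rewrite ffunE.
by have := u_le i; rewrite !ffunE leq_subRL.
Qed.

Lemma msubD r (a u x : mono r) : msub x (a + u) = msub (msub x a) u.
Proof. by apply/ffunP => i; rewrite !ffunE subnDA. Qed.

Section Coefficients.
Variables (k : fieldType) (r : nat).

Lemma pcoef_cat (p q : mpoly k r) m : pcoef (p ++ q) m = pcoef p m + pcoef q m.
Proof. by rewrite /pcoef big_cat. Qed.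

Lemma pcoef_flatten (s : seq (mpoly k r)) m :
  pcoef (flatten s) m = \sum_(p <- s) pcoef p m.
Proof.
elim: s => [|p s IH]; first by rewrite big_nil /pcoef big_nil.
by rewrite /= pcoef_cat IH big_cons.
Qed.

Lemma pcoef_pmul (q g : mpoly k r) x :
  pcoef (pmul q g) x =
  \sum_(u <- q) u.1 * (if mle u.2 x then pcoef g (msub x u.2) else 0).
Proof.
elim: q => [|u q IH]; first by rewrite big_nil /pcoef big_nil.
rewrite big_cons -IH /pmul allpairs_cons pcoef_cat; congr (_ + _).
rewrite /pcoef big_map /=.
under eq_bigl do rewrite -[[ffun i => _]]/(u.2 + _) maddE.
case: (mle u.2 x) => /=; last by rewrite big_pred0 ?mulr0.
by rewrite mulr_sumr.
Qed.

End Coefficients.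

Section LowDegreeIdeal.
Variables (k : fieldType) (n r : nat) (sigma : 'I_r -> point n) (B : int).

Definition low_kernel_elt (g : mpoly k r) :=
  (exists D : int, D <= B /\ homogeneous sigma D g) /\ (forall x, chi sigma g x = 0).

Definition in_low_ideal (f : mono r -> k) :=
  exists gs : seq (mpoly k r * mpoly k r),
    (forall qg, qg \in gs -> low_kernel_elt qg.2) /\
    (forall m, f m = pcoef (flatten [seq pmul qg.1 qg.2 | qg <- gs]) m).

Lemma in_low_ideal_ext f g : f =1 g -> in_low_ideal f -> in_low_ideal g.
Proof. by move=> fg [gs [gs_low f_gs]]; exists gs; split => // m; rewrite -fg. Qed.

Lemma in_low_ideal0 : in_low_ideal (fun _ => 0).
Proof. by exists [::]; split => // m; rewrite /pcoef big_nil. Qed.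

Lemma in_low_idealD f g :
  in_low_ideal f -> in_low_ideal g -> in_low_ideal (fun m => f m + g m).
Proof.
move=> [gs [gs_low f_gs]] [hs [hs_low g_hs]]; exists (gs ++ hs); split.
  by move=> qg; rewrite mem_cat => /orP[]; [apply: gs_low | apply: hs_low].
by move=> m; rewrite map_cat flatten_cat pcoef_cat f_gs g_hs.
Qed.

Lemma in_low_ideal_sum (I : eqType) (s : seq I) (F : I -> mono r -> k) :
  (forall i, i \in s -> in_low_ideal (F i)) ->
  in_low_ideal (fun m => \sum_(i <- s) F i m).
Proof.
elim: s => [|i s IH] F_low.
  by apply: in_low_ideal_ext in_low_ideal0 => m; rewrite big_nil.
have F_s_low : in_low_ideal (fun m => \sum_(j <- s) F j m).
  by apply: IH => j j_s; apply: F_low; rewrite inE j_s orbT.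
apply: in_low_ideal_ext (in_low_idealD (F_low i (mem_head _ _)) F_s_low).
by move=> m; rewrite big_cons.
Qed.

Lemma in_low_idealZ c f : in_low_ideal f -> in_low_ideal (fun m => c * f m).
Proof.
move=> [gs [gs_low f_gs]].
exists [seq ([seq (c * u.1, u.2) | u <- qg.1], qg.2) | qg <- gs]; split.
  by move=> qg /mapP[qg' qg'_gs ->]; exact: gs_low qg' qg'_gs.
move=> m; rewrite f_gs !pcoef_flatten !big_map mulr_sumr; apply: eq_bigr => qg _.
by rewrite !pcoef_pmul big_map mulr_sumr; apply: eq_bigr => u _ /=; rewrite mulrA.
Qed.

Lemma in_low_ideal_mulX a f :
  in_low_ideal f -> in_low_ideal (fun x => if mle a x then f (msub x a) else 0).
Proof.
move=> [gs [gs_low f_gs]].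
exists [seq ([seq (u.1, a + u.2) | u <- qg.1], qg.2) | qg <- gs]; split.
  by move=> qg /mapP[qg' qg'_gs ->]; exact: gs_low qg' qg'_gs.
move=> x; rewrite !pcoef_flatten !big_map; case: ifP => a_le_x.
  rewrite f_gs pcoef_flatten big_map; apply: eq_bigr => qg _.
  by rewrite !pcoef_pmul big_map; apply: eq_bigr => u _ /=; rewrite mleD a_le_x msubD.
rewrite big1 // => qg _; rewrite pcoef_pmul big_map big1 // => u _ /=.
by rewrite mleD a_le_x mulr0.
Qed.

Definition mono_coef (m x : mono r) : k := (x == m)%:R.

Definition binomial_mem (m m' : mono r) :=
  in_low_ideal (fun x => mono_coef m x - mono_coef m' x).

Lemma binomial_mem_refl m : binomial_mem m m.
Proof. by apply: in_low_ideal_ext in_low_ideal0 => x; rewrite subrr. Qed.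

Lemma binomial_mem_trans m1 m2 m3 :
  binomial_mem m1 m2 -> binomial_mem m2 m3 -> binomial_mem m1 m3.
Proof.
move=> m12 m23; apply: in_low_ideal_ext (in_low_idealD m12 m23) => x.
by rewrite addrA subrK.
Qed.

Lemma binomial_mem_sym m1 m2 : binomial_mem m1 m2 -> binomial_mem m2 m1.
Proof.
move=> m12; apply: in_low_ideal_ext (in_low_idealZ (-1) m12) => x.
by rewrite mulN1r opprB.
Qed.

Lemma binomial_memD a m1 m2 : binomial_mem m1 m2 -> binomial_mem (a + m1) (a + m2).
Proof.
move=> m12; apply: in_low_ideal_ext (in_low_ideal_mulX a m12) => x.
rewrite /mono_coef !(eq_sym x) !maddE; case: (mle a x) => /=; last by rewrite subrr.
by rewrite !(eq_sym _ (msub x a)).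
Qed.

Lemma binomial_mem_low m1 m2 :
  mexp sigma m1 = mexp sigma m2 -> mdeg sigma m1 <= B -> binomial_mem m1 m2.
Proof.
move=> m12 m1_low; pose g : mpoly k r := [:: (1, m1); (-1, m2)].
have g_coef x : pcoef g x = mono_coef m1 x - mono_coef m2 x.
  rewrite /pcoef /mono_coef !big_cons big_nil /= !(eq_sym x).
  by case: (m1 == x); case: (m2 == x); rewrite ?addr0 ?add0r ?subr0 ?sub0r ?subrr ?oppr0.
have g_low : low_kernel_elt g.
  split.
    exists (mdeg sigma m1); split => // m; rewrite g_coef /mono_coef.
    have [->//|_] := eqVneq m m1; have [->|_] := eqVneq m m2; last by rewrite subrr eqxx.
    by rewrite !mdegE m12.
  move=> x; rewrite /chi !big_cons big_nil /= m12.
  by case: (mexp sigma m2 == x); rewrite ?addr0 ?subrr.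
have g_mem : in_low_ideal (pcoef (pmul [:: (1, 0)] g)).
  exists [:: ([:: (1, 0)], g)]; split => [qg|m]; first by rewrite inE => /eqP ->.
  by rewrite /= pcoef_cat /pcoef big_nil addr0.
apply: in_low_ideal_ext g_mem => x; rewrite pcoef_pmul big_cons big_nil addr0 /= mul1r.
have -> : mle 0 x by apply/forallP => i; rewrite ffunE.
have -> : msub x 0 = x by apply/ffunP => i; rewrite !ffunE subn0.
by rewrite g_coef.
Qed.

(* Choosing one representative [rep m] in every fiber of [mexp sigma], a kernel
   element p is the combination of the binomials u.2 - rep u.2 over its terms u. *)
Lemma kernel_in_low_ideal :
  (forall m m', mexp sigma m = mexp sigma m' -> binomial_mem m m') ->
  forall p : mpoly k r, (forall x, chi sigma p x = 0) -> in_low_ideal (pcoef p).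
Proof.
move=> fiber_mem p p_ker.
have fiber_inhab (m : mono r) : exists m', mexp sigma m' == mexp sigma m by exists m.
pose rep m := xchoose (fiber_inhab m).
have mexp_rep m : mexp sigma (rep m) = mexp sigma m.
  exact/eqP/(xchooseP (fiber_inhab m)).
have rep_fiber m m' : mexp sigma m = mexp sigma m' -> rep m = rep m'.
  by move=> E; apply: eq_xchoose => z /=; rewrite E.
have rep_part_eq0 x : \sum_(u <- p) u.1 * mono_coef (rep u.2) x = 0.
  have [x_rep|x_nrep] := eqVneq (rep x) x; last first.
    rewrite big1 // => u _; rewrite /mono_coef; case: eqP => [E|]; last by rewrite mulr0.
    by move: x_nrep; rewrite E (rep_fiber _ _ (mexp_rep u.2)) eqxx.
  transitivity (chi sigma p (mexp sigma x)); last exact: p_ker.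
  rewrite /chi [RHS]big_mkcond /=; apply: eq_bigr => u _.
  rewrite /mono_coef; have -> : (x == rep u.2) = (mexp sigma u.2 == mexp sigma x).
    apply/eqP/eqP => [->|E]; first by rewrite mexp_rep.
    by rewrite -x_rep (rep_fiber _ _ E).
  by case: (mexp sigma u.2 == mexp sigma x); rewrite ?mulr1 ?mulr0.
have p_mem : in_low_ideal (fun x =>
    \sum_(u <- p) u.1 * (mono_coef u.2 x - mono_coef (rep u.2) x)).
  apply: in_low_ideal_sum => u _; apply: in_low_idealZ; apply: fiber_mem.
  by rewrite mexp_rep.
apply: in_low_ideal_ext p_mem => x; under eq_bigr do rewrite mulrBr.
rewrite sumrB rep_part_eq0 subr0 /pcoef [RHS]big_mkcond /=; apply: eq_bigr => u _.
by rewrite /mono_coef eq_sym; case: (u.2 == x); rewrite ?mulr1 ?mulr0.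
Qed.

End LowDegreeIdeal.

Lemma intr_sum (I : Type) (s : seq I) (f : I -> int) :
  (\sum_(i <- s) f i)%:~R = \sum_(i <- s) (f i)%:~R :> rat.
Proof. exact: (big_morph _ (@intrD _) (mulr0z _)). Qed.

Section NonnegCombination.
Variables (n t : nat) (e : 'I_t.+1 -> point n).

Definition nncomb (lam : 'I_t.+1 -> rat) (x : point n) : Prop :=
  (forall j, 0 <= lam j) /\ ((x.1)%:~R = \sum_j lam j * ((e j).1)%:~R) /\
  (forall i, (x.2 i)%:~R = \sum_j lam j * ((e j).2 i)%:~R).

Lemma nncomb0 : nncomb (fun _ => 0) 0.
Proof.
split=> //; split; first by rewrite /= big1 // => j _; rewrite mul0r.
by move=> i; rewrite ffunE big1 // => j _; rewrite mul0r.
Qed.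

Lemma nncombD lam mu x y :
  nncomb lam x -> nncomb mu y -> nncomb (fun j => lam j + mu j) (x + y).
Proof.
move=> [lam_ge0 [x1 x2]] [mu_ge0 [y1 y2]]; split=> [j|]; first by rewrite addr_ge0.
split=> [|i]; rewrite /= ?ffunE intrD ?x1 ?y1 ?x2 ?y2 -big_split.
  by apply: eq_bigr => j _; rewrite mulrDl.
by apply: eq_bigr => j _; rewrite mulrDl.
Qed.

Lemma inQnnSpan0 : inQnnSpan e 0.
Proof. by exists (fun _ => 0); apply: nncomb0. Qed.

Lemma inQnnSpanD x y : inQnnSpan e x -> inQnnSpan e y -> inQnnSpan e (x + y).
Proof.
by move=> [lam lam_x] [mu mu_y]; exists (fun j => lam j + mu j); apply: nncombD.
Qed.

Lemma nncombB lam mu x y :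
  nncomb lam x -> nncomb mu y -> (forall j, mu j <= lam j) ->
  nncomb (fun j => lam j - mu j) (x - y).
Proof.
move=> [_ [x1 x2]] [_ [y1 y2]] mu_le; split=> [j|]; first by rewrite subr_ge0.
split=> [|i]; rewrite /= ?ffunE intrB ?x1 ?y1 ?x2 ?y2 -sumrB.
  by apply: eq_bigr => j _; rewrite mulrBl.
by apply: eq_bigr => j _; rewrite mulrBl.
Qed.

Definition unitv (j : 'I_t.+1) : 'I_t.+1 -> rat := fun l => (l == j)%:R.

Lemma nncomb_unitv j : nncomb (unitv j) (e j).
Proof.
have unitv_sum (f : 'I_t.+1 -> rat) : f j = \sum_l unitv j l * f l.
  rewrite (bigD1 j) //= big1 /unitv ?eqxx ?mul1r ?addr0 // => l /negbTE ->.
  by rewrite mul0r.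
split=> [l|]; first by rewrite /unitv ler0n.
by split=> [|i]; apply: unitv_sum.
Qed.

Lemma nncomb_sub_unitv lam x j : nncomb lam x -> 1 <= lam j ->
  nncomb (fun l => lam l - unitv j l) (x - e j).
Proof.
move=> lam_x lam_j; apply: (nncombB lam_x (nncomb_unitv j)) => l; rewrite /unitv.
by have [->//|_] := eqVneq l j; case: lam_x.
Qed.

Lemma nncomb_interp lam lam' x c : nncomb lam x -> nncomb lam' x -> 0 <= c -> c <= 1 ->
  nncomb (fun l => lam l + c * (lam' l - lam l)) x.
Proof.
have interp_sum (v : 'I_t.+1 -> rat) :
    \sum_l (lam l + c * (lam' l - lam l)) * v l =
    \sum_l lam l * v l + c * (\sum_l lam' l * v l - \sum_l lam l * v l).
  by rewrite -sumrB mulr_sumr -big_split; apply: eq_bigr => l _ /=; ring.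
move=> [lam_ge0 [x1 x2]] [lam'_ge0 [x1' x2']] c_ge0 c_le1; split.
  by move=> l; move: (lam_ge0 l) (lam'_ge0 l); nra.
by split=> [|i]; rewrite interp_sum -?x1 -?x1' -?x2 -?x2' subrr mulr0 addr0.
Qed.

Hypothesis e_deg_gt0 : forall j, 0 < (e j).1.
Local Notation S := (\sum_j (e j).1).

Lemma e_deg_le j : (e j).1 <= S.
Proof. by rewrite (bigD1 j) //= lerDl sumr_ge0 // => l _; apply: ltW. Qed.

Lemma nncomb_deg_ge0 lam x : nncomb lam x -> 0 <= x.1.
Proof.
move=> [lam_ge0 [x1 _]]; rewrite -(ler0z rat) x1; apply: sumr_ge0 => j _.
by apply: mulr_ge0 => //; rewrite ler0z ltW.
Qed.

Lemma nncomb_deg_eq0 lam x : nncomb lam x -> x.1 = 0 -> x = 0.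
Proof.
move=> [lam_ge0 [x1 x2]] x1_eq0.
have terms_ge0 (l : 'I_t.+1) : true -> 0 <= lam l * ((e l).1)%:~R.
  by move=> _; apply: mulr_ge0 => //; rewrite ler0z ltW.
have lam_eq0 j : lam j = 0.
  have sum_eq0 : \sum_j lam j * ((e j).1)%:~R = 0 by rewrite -x1 x1_eq0.
  have /eqP := @psumr_eq0P _ _ _ _ terms_ge0 sum_eq0 j isT.
  by rewrite mulf_eq0 intr_eq0 (gt_eqF (e_deg_gt0 j)) orbF => /eqP.
rewrite [x]surjective_pairing x1_eq0; congr pair; apply/ffunP => i.
apply: (@intr_inj rat); rewrite x2 ffunE big1 // => j _.
by rewrite lam_eq0 mul0r.
Qed.

Lemma nncomb_deg_gt0 lam x : nncomb lam x -> x != 0 -> 0 < x.1.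
Proof.
move=> lam_x x_neq0; rewrite lt_def (nncomb_deg_ge0 lam_x) andbT.
by apply: contra x_neq0 => /eqP x1_eq0; rewrite (nncomb_deg_eq0 lam_x x1_eq0).
Qed.

Lemma nncomb_le_deg lam x l : nncomb lam x -> lam l <= (x.1)%:~R.
Proof.
move=> [lam_ge0 [x1 _]]; rewrite x1 (bigD1 l) //=.
have e_l_ge1 : 1 <= ((e l).1)%:~R :> rat by rewrite ler1z; apply: e_deg_gt0.
have rest_ge0 : 0 <= \sum_(i < t.+1 | i != l) lam i * ((e i).1)%:~R.
  by apply: sumr_ge0 => i _; apply: mulr_ge0 => //; rewrite ler0z ltW.
by move: (lam_ge0 l); nra.
Qed.

Lemma nncomb_exists_ge lam x c :
  c * S%:~R <= (x.1)%:~R -> nncomb lam x -> exists j, c <= lam j.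
Proof.
move=> x1_ge [_ [x1 _]]; apply/existsP; apply: contraLR x1_ge => /existsPn lam_lt.
rewrite -ltNge x1 intr_sum mulr_sumr; apply: ltr_sum.
  by apply/hasP; exists ord0 => //; rewrite mem_index_enum.
move=> j _; have : lam j < c by rewrite ltNge lam_lt.
have : 0 < ((e j).1)%:~R :> rat by rewrite ltr0z.
by nra.
Qed.

(* Walk from [lam] to [lam'] along the segment between them in steps of size
   [1/K]: every point of the walk has a coordinate >= 1 + 1/S, and such a
   coordinate stays >= 1 after one step, so consecutive points share a
   coordinate >= 1. *)
Lemma nncomb_chain (R : 'I_t.+1 -> 'I_t.+1 -> Prop) x :
  S < x.1 -> (forall j1 j2 j3, R j1 j2 -> R j2 j3 -> R j1 j3) ->
  (forall lam j1 j2, nncomb lam x -> 1 <= lam j1 -> 1 <= lam j2 -> R j1 j2) ->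
  forall lam lam' j j', nncomb lam x -> nncomb lam' x ->
    1 <= lam j -> 1 <= lam' j' -> R j j'.
Proof.
move=> S_lt R_trans R_step lam lam' j j' lam_x lam'_x lam_j lam'_j'.
pose s : rat := S%:~R; pose d : rat := (x.1)%:~R.
have s_ge1 : 1 <= s.
  by rewrite ler1z -gtz0_ge1; exact: lt_le_trans (e_deg_gt0 ord0) (e_deg_le ord0).
have s_neq0 : s != 0 by rewrite gt_eqF // (lt_le_trans ltr01 s_ge1).
have d_ge : s + 1 <= d by rewrite -[1]/(1%:~R : rat) -intrD ler_int lezD1.
pose K := (`|x.1| * `|S|)%N.
have S_ge0 : 0 <= S by apply: sumr_ge0 => l _; apply: ltW.
have K_E : K%:R = d * s.
  by rewrite natrM !natr_absz !ger0_norm // (le_trans S_ge0 (ltW S_lt)).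
have K_gt0 : 0 < K%:R :> rat by rewrite K_E; nra.
pose L (k : nat) l := lam l + (k%:R / K%:R) * (lam' l - lam l).
have L_comb k : (k <= K)%N -> nncomb (L k) x.
  move=> k_le; apply: nncomb_interp => //; first by rewrite divr_ge0 ?ler0n ?ltW.
  by rewrite ler_pdivrMr // mul1r ler_nat.
have L_large k : (k <= K)%N -> exists l, 1 + s^-1 <= L k l.
  move=> k_le; apply: nncomb_exists_ge (L_comb k k_le).
  by rewrite mulrDl mul1r mulVf.
have L_stable k l : 1 + s^-1 <= L k l -> 1 <= L k.+1 l.
  have step_E : L k.+1 l = L k l + (lam' l - lam l) / K%:R.
    by rewrite /L -addn1 natrD; field; rewrite gt_eqF.
  have : lam l / K%:R <= s^-1.
    rewrite ler_pdivrMr // K_E mulrCA mulVf // mulr1.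
    exact: nncomb_le_deg lam_x.
  have : 0 <= lam' l / K%:R by apply: divr_ge0; [exact: lam'_x.1 | exact: ltW].
  by rewrite step_E mulrBl; lra.
have L0 l : L 0%N l = lam l by rewrite /L mul0r mul0r addr0.
have LK l : L K l = lam' l by rewrite /L divff ?gt_eqF // mul1r addrC subrK.
have walk k : (k <= K)%N -> exists2 l, 1 + s^-1 <= L k l & R j l.
  elim: k => [|k IH] k_le.
    have [l l_large] := L_large 0%N k_le; exists l => //.
    by apply: (R_step lam) => //; rewrite -L0; move: l_large; have := invr_ge0 s; lra.
  have [l l_large R_jl] := IH (ltnW k_le); have [l' l'_large] := L_large _ k_le.
  exists l' => //; apply: R_trans R_jl (R_step _ _ _ (L_comb _ k_le) _ _).
    exact: L_stable l_large.
  by move: l'_large; have := invr_ge0 s; lra.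
have [l l_large R_jl] := walk K (leqnn K).
apply: R_trans R_jl (R_step lam' _ _ lam'_x _ lam'_j').
by rewrite -LK; move: l_large; have := invr_ge0 s; lra.
Qed.

End NonnegCombination.

Section GradedSemigroup.
Variables (k : fieldType) (n : nat) (alpha : 'I_n.+1 -> rat) (a b : 'I_n.+1 -> int).
Variables (t : nat) (e : 'I_t.+1 -> point n).
Local Notation inS := (inSigma alpha a b).
Local Notation S := (\sum_j (e j).1).
Local Notation B := (2 * (S - 1)).

Hypothesis e_in : forall j, inS (e j).
Hypothesis e_deg_gt0 : forall j, 0 < (e j).1.
Hypothesis Sigma_span : forall x, inS x -> inQnnSpan e x.

Lemma S_ge1 : 1 <= S.
Proof.
by rewrite -gtz0_ge1; exact: lt_le_trans (e_deg_gt0 ord0) (e_deg_le e_deg_gt0 ord0).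
Qed.

Lemma nncomb_inSigma lam x : nncomb e lam x -> inS x.
Proof.
move=> [lam_ge0 [x1 x2]].
have lin_eq0 (c : 'I_n.+1 -> int) : (forall j, \sum_i c i * (e j).2 i = 0) ->
    \sum_i c i * x.2 i = 0.
  move=> c_e; apply: (@intr_inj rat); rewrite intr_sum mulr0z.
  under eq_bigr do rewrite intrM x2 mulr_sumr.
  rewrite exchange_big /= big1 // => j _.
  under eq_bigr do rewrite mulrCA.
  rewrite -mulr_sumr; have -> : \sum_i (c i)%:~R * ((e j).2 i)%:~R =
      (\sum_i c i * (e j).2 i)%:~R :> rat.
    by rewrite intr_sum; apply: eq_bigr => i _; rewrite intrM.
  by rewrite c_e mulr0.
split.
  rewrite -(ler0z rat) x1; apply: sumr_ge0 => j _; apply: mulr_ge0 => //.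
  by rewrite ler0z; case: (e_in j).
split.
  move=> i; rewrite x1 x2 mulr_suml -sumrN; apply: ler_sum => j _.
  by rewrite -mulrA -mulrN; apply: ler_wpM2l => //; case: (e_in j) => _ [].
by split; apply: lin_eq0 => j; case: (e_in j) => _ [_ []].
Qed.

Variables (r : nat) (sigma : 'I_r -> point n).
Hypothesis sigma_in : forall i, [/\ inS (sigma i), sigma i != 0 & (sigma i).1 <= S].
Hypothesis sigma_onto : forall x, inS x -> x != 0 -> x.1 <= S -> exists i, sigma i = x.

Lemma exists_e_index j : exists i, sigma i = e j.
Proof.
apply: sigma_onto => //; last exact: e_deg_le.
by apply/eqP => e_j_eq0; move: (e_deg_gt0 j); rewrite e_j_eq0 ltxx.
Qed.

Lemma mexp_span m : inQnnSpan e (mexp sigma m).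
Proof.
rewrite mexpE; apply: big_ind => //; [exact: inQnnSpan0 | exact: inQnnSpanD |].
move=> i _; elim: (m i) => [|l IH]; first exact: inQnnSpan0.
by rewrite mulrS; apply: inQnnSpanD IH; apply: Sigma_span; case: (sigma_in i).
Qed.

Lemma mexp_deg_ge0 m : 0 <= (mexp sigma m).1.
Proof. by have [lam lam_m] := mexp_span m; apply: nncomb_deg_ge0 lam_m. Qed.

Lemma sigma_deg_gt0 i : 0 < (sigma i).1.
Proof.
have [sigma_i_in sigma_i_neq0 _] := sigma_in i.
by have [lam lam_i] := Sigma_span sigma_i_in; apply: nncomb_deg_gt0 lam_i _.
Qed.

Lemma mexp_deg_gt0 m : m != 0 -> 0 < (mexp sigma m).1.
Proof.
move=> /mono_split [i [m1 ->]]; rewrite mexpD mexp_var /=.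
by apply: ltr_wpDr (mexp_deg_ge0 m1) (sigma_deg_gt0 i).
Qed.

Lemma mexp_deg_eq1 m : (mexp sigma m).1 = 1 -> exists i, m = mvar i.
Proof.
have [->|m_neq0] := eqVneq m 0; first by rewrite mexp0.
have [i [m1 ->]] := mono_split m_neq0; rewrite mexpD mexp_var /= => deg_eq1.
exists i; have [->|m1_neq0] := eqVneq m1 0; first by rewrite addr0.
by move: deg_eq1 (sigma_deg_gt0 i) (mexp_deg_gt0 m1_neq0); lia.
Qed.

Lemma split_large_factor m : B < (mexp sigma m).1 -> (mexp sigma m).1 != 1 ->
  exists p q, [/\ m = p + q, q != 0 & S <= (mexp sigma p).1].
Proof.
move=> deg_gtB deg_neq1; have S1 := S_ge1; set s : int := \sum_j (e j).1 in S1 deg_gtB *.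
have m_neq0 : m != 0.
  by apply/eqP => m_eq0; move: deg_gtB; rewrite m_eq0 mexp0 raddf0; lia.
have [i [m1 m_E]] := mono_split m_neq0; move: deg_gtB deg_neq1.
rewrite m_E mexpD mexp_var /= => deg_gtB deg_neq1; have [_ _ sigma_i_le] := sigma_in i.
have m1_neq0 : m1 != 0.
  apply/eqP => m1_eq0; move: deg_gtB deg_neq1; rewrite m1_eq0 mexp0 raddf0 addr0.
  by move=> ? /eqP; lia.
have [S_le_i|i_lt_S] := lerP S (sigma i).1; first by exists (mvar i), m1; rewrite mexp_var.
exists m1, (mvar i); split; first by rewrite addrC.
  by apply/eqP => /ffunP/(_ i); rewrite !ffunE eqxx.
by lia.
Qed.

Variable ie : 'I_t.+1 -> 'I_r.
Hypothesis sigma_ie : forall j, sigma (ie j) = e j.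

Lemma mexp_onto y : inS y -> exists c, mexp sigma c = y.
Proof.
move=> y_in; have [N] := ubnP `|y.1|; elim: N => // N IH in y y_in *; move=> y_lt.
have [->|y_neq0] := eqVneq y 0; first by exists 0; rewrite mexp0.
have [y_le|S_lt_y] := lerP y.1 S.
  by have [i <-] := sigma_onto y_in y_neq0 y_le; exists (mvar i); rewrite mexp_var.
have [lam lam_y] := Sigma_span y_in.
have [j lam_j] : exists j, 1 <= lam j.
  by apply: nncomb_exists_ge lam_y; rewrite // mul1r ler_int ltW.
have [c c_E] : exists c, mexp sigma c = y - e j.
  apply: IH; first exact: nncomb_inSigma (nncomb_sub_unitv lam_y lam_j).
  have -> : (y - e j).1 = y.1 - (e j).1 by [].
  move: (e_deg_gt0 j) (e_deg_le e_deg_gt0 j) S_lt_y y_lt.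
  set s : int := \sum_j (e j).1; lia.
by exists (mvar (ie j) + c); rewrite mexpD mexp_var sigma_ie c_E addrC subrK.
Qed.

Section Fiber.
Variable x : point n.
Local Notation bm := (binomial_mem k sigma B).
Hypothesis fiber_below : forall m m', (mexp sigma m).1 < x.1 ->
  mexp sigma m = mexp sigma m' -> bm m m'.

Lemma mexp_var_e j c : mexp sigma (mvar (ie j) + c) = e j + mexp sigma c.
Proof. by rewrite mexpD mexp_var sigma_ie. Qed.

Lemma exchange_large_factor p q : mexp sigma (p + q) = x -> q != 0 ->
  S <= (mexp sigma p).1 ->
  exists j c, mexp sigma (mvar (ie j) + c) = x /\ bm (p + q) (mvar (ie j) + c).
Proof.
move=> pq_x q_neq0 p_large; have [lam lam_p] := mexp_span p.
have [j lam_j] : exists j, 1 <= lam j.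
  by apply: nncomb_exists_ge lam_p; rewrite // mul1r ler_int.
have [c c_E] := mexp_onto (nncomb_inSigma (nncomb_sub_unitv lam_p lam_j)).
have jc_p : mexp sigma (mvar (ie j) + c) = mexp sigma p.
  by rewrite mexp_var_e c_E addrC subrK.
exists j, (q + c); split; first by rewrite addrCA mexpD jc_p -mexpD addrC.
rewrite [p + q]addrC [mvar _ + (q + c)]addrCA; apply: binomial_memD.
apply: fiber_below (esym jc_p).
by rewrite -pq_x mexpD /= ltrDl mexp_deg_gt0.
Qed.

Lemma reduce_to_e_factor m : B < x.1 -> x.1 != 1 -> mexp sigma m = x ->
  exists j c, mexp sigma (mvar (ie j) + c) = x /\ bm m (mvar (ie j) + c).
Proof.
move=> x_gtB x_neq1 m_x; rewrite -m_x in x_gtB x_neq1.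
have [p [q [m_E q_neq0 p_large]]] := split_large_factor x_gtB x_neq1.
by rewrite m_E in m_x *; apply: exchange_large_factor.
Qed.

Lemma nncomb_of_e_factor j c : mexp sigma (mvar (ie j) + c) = x ->
  exists2 lam, nncomb e lam x & 1 <= lam j.
Proof.
move=> jc_x; have [mu mu_c] := mexp_span c; exists (fun l => unitv j l + mu l).
  by rewrite -jc_x mexp_var_e; apply: nncombD (nncomb_unitv e j) mu_c.
by rewrite /unitv eqxx lerDl; case: mu_c.
Qed.

(* The existence clause is what makes [e_linked] transitive. *)
Definition e_linked j1 j2 :=
  (exists c, mexp sigma (mvar (ie j1) + c) = x) /\
  forall c1 c2, mexp sigma (mvar (ie j1) + c1) = x ->
    mexp sigma (mvar (ie j2) + c2) = x -> bm (mvar (ie j1) + c1) (mvar (ie j2) + c2).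

Lemma e_linked_trans j1 j2 j3 : e_linked j1 j2 -> e_linked j2 j3 -> e_linked j1 j3.
Proof.
move=> [ex_c1 link12] [[c2 c2_x] link23]; split=> // c1 c3 c1_x c3_x.
exact: binomial_mem_trans (link12 _ _ c1_x c2_x) (link23 _ _ c2_x c3_x).
Qed.

(* If [x - e j1 - e j2] lies in Sigma, both monomials are connected, through
   the fiber over a point of smaller degree, to [w_(ie j1) w_(ie j2) cw]. *)
Lemma e_linked_step lam j1 j2 : nncomb e lam x -> 1 <= lam j1 -> 1 <= lam j2 ->
  e_linked j1 j2.
Proof.
move=> lam_x lam_j1 lam_j2; have x_j1 := nncomb_sub_unitv lam_x lam_j1.
have [c1 c1_E] := mexp_onto (nncomb_inSigma x_j1).
split; first by exists c1; rewrite mexp_var_e c1_E addrC subrK.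
move=> d1 d2 d1_x d2_x.
have d_E j d : mexp sigma (mvar (ie j) + d) = x -> mexp sigma d = x - e j.
  by move=> <-; rewrite mexp_var_e [RHS]addrC addKr.
have below j d : mexp sigma (mvar (ie j) + d) = x -> (mexp sigma d).1 < x.1.
  move=> /d_E ->; have -> : (x - e j).1 = x.1 - (e j).1 by [].
  by rewrite gtrBl.
have [j12|j1_neq_j2] := eqVneq j1 j2.
  subst j2; apply: binomial_memD; apply: fiber_below (below _ _ d1_x) _.
  by rewrite (d_E _ _ d1_x) (d_E _ _ d2_x).
have lam_j2' : 1 <= lam j2 - unitv j1 j2.
  by rewrite /unitv eq_sym (negbTE j1_neq_j2) subr0.
have [cw cw_E] := mexp_onto (nncomb_inSigma (nncomb_sub_unitv x_j1 lam_j2')).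
have w2_x : mexp sigma (mvar (ie j2) + cw) = x - e j1.
  by rewrite mexp_var_e cw_E addrC subrK.
have w1_x : mexp sigma (mvar (ie j1) + cw) = x - e j2.
  by rewrite mexp_var_e cw_E addrCA addrA subrK.
have link1 := binomial_memD (mvar (ie j1)) (fiber_below (below _ _ d1_x)
  (etrans (d_E _ _ d1_x) (esym w2_x))).
have link2 := binomial_memD (mvar (ie j2)) (fiber_below (below _ _ d2_x)
  (etrans (d_E _ _ d2_x) (esym w1_x))).
by rewrite addrCA in link2; apply: binomial_mem_trans link1 (binomial_mem_sym link2).
Qed.

Lemma fiber_step m m' : B < x.1 -> x.1 != 1 -> mexp sigma m = x ->
  mexp sigma m' = x -> bm m m'.
Proof.
move=> x_gtB x_neq1 m_x m'_x.
have S_lt_x : S < x.1.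
  move: S_ge1 x_gtB x_neq1; set s : int := \sum_j (e j).1 => ? ? /eqP; lia.
have [j [c [jc_x m_jc]]] := reduce_to_e_factor x_gtB x_neq1 m_x.
have [j' [c' [jc'_x m'_jc']]] := reduce_to_e_factor x_gtB x_neq1 m'_x.
have [lam lam_x lam_j] := nncomb_of_e_factor jc_x.
have [lam' lam'_x lam'_j'] := nncomb_of_e_factor jc'_x.
have [_ link] := nncomb_chain e_deg_gt0 S_lt_x e_linked_trans e_linked_step
  lam_x lam'_x lam_j lam'_j'.
apply: binomial_mem_trans m_jc (binomial_mem_trans (link _ _ jc_x jc'_x) _).
exact: binomial_mem_sym.
Qed.

End Fiber.

Hypothesis sigma_inj : injective sigma.

Lemma fiber_binomial_mem m m' :
  mexp sigma m = mexp sigma m' -> binomial_mem k sigma B m m'.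
Proof.
move=> mm'; have [N] := ubnP `|(mexp sigma m).1|.
elim: N => // N IH in m m' mm' *; move=> m_lt.
have [m_low|m_gtB] := lerP (mexp sigma m).1 B.
  by apply: binomial_mem_low; rewrite ?mdegE.
have [m_eq1|m_neq1] := eqVneq (mexp sigma m).1 1.
  have [i m_E] := mexp_deg_eq1 m_eq1.
  have [i' m'_E] : exists i', m' = mvar i' by apply: mexp_deg_eq1; rewrite -mm'.
  by move: mm'; rewrite m_E m'_E !mexp_var => /sigma_inj ->; apply: binomial_mem_refl.
apply: (fiber_step (x := mexp sigma m)) => // m1 m1' m1_lt m11'.
apply: IH m11' _; move: m1_lt m_lt (mexp_deg_ge0 m1); lia.
Qed.

Lemma chi_onto f : (forall u, u \in f -> inS u.2) ->
  exists p : mpoly k r, forall x, chi sigma p x = scoef f x.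
Proof.
elim: f => [|u f IH] f_in; first by exists [::] => x; rewrite /chi /scoef !big_nil.
have [p p_E] : exists p : mpoly k r, forall x, chi sigma p x = scoef f x.
  by apply: IH => v v_f; apply: f_in; rewrite inE v_f orbT.
have [c c_E] := mexp_onto (f_in u (mem_head _ _)).
exists ((u.1, c) :: p) => x.
by rewrite /chi /scoef !big_cons /= c_E -/(chi sigma p x) p_E.
Qed.

End GradedSemigroup.

Unset Implicit Arguments.

Theorem mainTheorem7 (k : fieldType) (n : nat)
    (alpha : 'I_n.+1 -> rat) (a b : 'I_n.+1 -> int)
    (t : nat) (e : 'I_t.+1 -> point n)
    (he : forall j, inSigma alpha a b (e j))
    (hdelta : forall j, 0 < (e j).1)
    (hspan : forall x, inSigma alpha a b x -> inQnnSpan e x)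
    (r : nat) (sigma : 'I_r -> point n)
    (hsig_inj : injective sigma)
    (hsig_in : forall i, [/\ inSigma alpha a b (sigma i), sigma i != pt_zero n
                             & (sigma i).1 <= \sum_j (e j).1])
    (hsig_onto : forall x, inSigma alpha a b x -> x != pt_zero n ->
                   x.1 <= \sum_j (e j).1 -> exists i, sigma i = x) :
  let S := \sum_j (e j).1 in
  (forall f : seq (k * point n)%type,
     (forall u, u \in f -> inSigma alpha a b u.2) ->
     exists p : mpoly k r, forall x, chi sigma p x = scoef f x) /\
  (forall p : mpoly k r, (forall x, chi sigma p x = 0) ->
     exists gs : seq (mpoly k r * mpoly k r),
       (forall qg, qg \in gs ->
          (exists D : int, D <= 2 * (S - 1) /\ homogeneous sigma D qg.2) /\
          (forall x, chi sigma qg.2 x = 0)) /\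
       (forall m, pcoef p m = pcoef (flatten [seq pmul qg.1 qg.2 | qg <- gs]) m)).
Proof.
move=> S.
have sigma_in : forall i,
  [/\ inSigma alpha a b (sigma i), sigma i != 0 & (sigma i).1 <= S] := hsig_in.
have sigma_onto : forall x, inSigma alpha a b x -> x != 0 -> x.1 <= S ->
  exists i, sigma i = x := hsig_onto.
have [ie sigma_ie] := fin_all_exists (exists_e_index he hdelta sigma_onto).
split=> [f f_in|p p_ker].
  exact: (chi_onto he hdelta hspan sigma_onto sigma_ie f_in).
apply: kernel_in_low_ideal p_ker => m m'.
exact: (fiber_binomial_mem k he hdelta hspan sigma_in sigma_onto sigma_ie hsig_inj).
Qed.
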